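(* Fix $i,j\in\{1,\dots,I\}$ and $v,v_*\in\mathbb{R}^3$, and let $E=\langle v\rangle_i^2+\langle v_*\rangle_j^2$ and $r=\frac{m_i}{m_i+m_j}$. Then there exist functions $p=p(v,v_*,m_i,m_j)$, $q=q(v,v_*,m_i,m_j)$ and $s=s(v,v_*,m_i,m_j)\in[0,1]$ with $p+q=E$ such that, with $\lambda:=2\sqrt{r(1-r)(sE-1)((1-s)E-1)}$, for every $\sigma\in S^2$ $$\langle v'\rangle_i^2=p+\lambda\,\sigma\cdot\hat V,\qquad \langle v'_*\rangle_j^2=q-\lambda\,\sigma\cdot\hat V,$$ so that $\langle v'\rangle_i^2+\langle v'_*\rangle_j^2=p+q=E=\langle v\rangle_i^2+\langle v_*\rangle_j^2$. Moreover $p+\lambda\le E$ and $q+\lambda\le E$ for all $v,v_*\in\mathbb{R}^3$ and all $m_i,m_j>0$.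
   Context: Masses $m_1,\dots,m_I>0$, $M:=\sum_{\ell=1}^I m_\ell$, $\langle v\rangle_i:=\big(1+\tfrac{m_i}{M}|v|^2\big)^{1/2}$. For the pair $(i,j)$: $V=\frac{m_iv+m_jv_*}{m_i+m_j}$ (center of mass velocity), $\hat V=V/|V|$, and $v'=V+\frac{m_j}{m_i+m_j}|v-v_*|\sigma$, $v'_*=V-\frac{m_i}{m_i+m_j}|v-v_*|\sigma$ for $\sigma\in S^2$. *)

From HB Require Import structures.
From mathcomp Require Import all_boot all_order all_algebra.
Set Implicit Arguments. Unset Strict Implicit. Unset Printing Implicit Defensive.
Import Order.TTheory GRing.Theory Num.Theory.
Local Open Scope ring_scope.

Section Defs.
Variable R : rcfType.

Definition dot (x y : 'rV[R]_3) : R := \sum_(k < 3) x 0 k * y 0 k.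
Definition vnorm (x : 'rV[R]_3) : R := Num.sqrt (dot x x).

Definition Mtot (I : nat) (m : 'I_I -> R) : R := \sum_(l < I) m l.

Definition jbr (I : nat) (m : 'I_I -> R) (i : 'I_I) (x : 'rV[R]_3) : R :=
  Num.sqrt (1 + m i / Mtot m * vnorm x ^+ 2).

Definition Vcm (mi mj : R) (v vs : 'rV[R]_3) : 'rV[R]_3 :=
  (mi + mj)^-1 *: (mi *: v + mj *: vs).

(* unit vector V/|V| (with the field convention 0^-1 = 0, so it is 0 when V = 0) *)
Definition Vhat (mi mj : R) (v vs : 'rV[R]_3) : 'rV[R]_3 :=
  (vnorm (Vcm mi mj v vs))^-1 *: Vcm mi mj v vs.

Definition vpost (mi mj : R) (v vs sigma : 'rV[R]_3) : 'rV[R]_3 :=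
  Vcm mi mj v vs + (mj / (mi + mj) * vnorm (v - vs)) *: sigma.
Definition vspost (mi mj : R) (v vs sigma : 'rV[R]_3) : 'rV[R]_3 :=
  Vcm mi mj v vs - (mi / (mi + mj) * vnorm (v - vs)) *: sigma.

End Defs.

(** Write [n = |V|], [g = |v - v_*|] and [S = m_i + m_j].  Since
    [v' = V + (m_j/S) g sigma] with [|sigma| = 1], expanding the square gives
    [<v'>_i^2 = p + lambda sigma.V^] with [p = 1 + (m_i/M)(n^2 + (m_j g/S)^2)]
    and [lambda = 2 m_i m_j g n / (S M)], and symmetrically for [v'_*].
    The splitting of the kinetic energy into its centre-of-mass part
    [X = S n^2/M] and relative part [Y = m_i m_j g^2/(S M)] gives
    [E = 2 + X + Y]; with [s = (1 + X)/E] one has [sE - 1 = X] and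
    [(1 - s)E - 1 = Y], so the square root in the statement is exactly
    [lambda].  Finally [E - p - lambda = 1 + (m_j/M)(n - m_i g/S)^2 >= 0]. *)

From HB Require Import structures.
From mathcomp Require Import all_boot all_order all_algebra.
From mathcomp Require Import ring lra.
Set Implicit Arguments. Unset Strict Implicit. Unset Printing Implicit Defensive.
Import Order.TTheory GRing.Theory Num.Theory.
Local Open Scope ring_scope.

Section DotProduct.
Variable R : rcfType.
Implicit Types (x y sigma : 'rV[R]_3) (c : R).

Lemma dotE x y : dot x y = x 0 0 * y 0 0 + x 0 1 * y 0 1 + x 0 2%:R * y 0 2%:R.
Proof.
rewrite /dot !big_ord_recr big_ord0 /= add0r.
by congr (_ + _ + _); congr (_ * _); congr (_ _ _); apply/val_inj.
Qed.

Lemma dot_ge0 x : 0 <= dot x x.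
Proof. by rewrite dotE; nra. Qed.

Lemma sqr_vnorm x : vnorm x ^+ 2 = dot x x.
Proof. by rewrite sqr_sqrtr // dot_ge0. Qed.

Lemma dotZr x y c : dot y (c *: x) = c * dot y x.
Proof. by rewrite !dotE !mxE; ring. Qed.

Lemma dot_self_eq0 x y : dot x x = 0 -> dot y x = 0.
Proof.
rewrite !dotE => xx0.
have x0 : x 0 0 = 0 by apply/eqP; rewrite -sqrf_eq0; apply/eqP; nra.
have x1 : x 0 1 = 0 by apply/eqP; rewrite -sqrf_eq0; apply/eqP; nra.
have x2 : x 0 2%:R = 0 by apply/eqP; rewrite -sqrf_eq0; apply/eqP; nra.
by rewrite x0 x1 x2; ring.
Qed.

Lemma vnorm_dot_normalized x y : vnorm x * dot y ((vnorm x)^-1 *: x) = dot y x.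
Proof.
rewrite dotZr; have [nx0|nx_neq0] := eqVneq (vnorm x) 0.
  by rewrite nx0 mul0r dot_self_eq0 // -sqr_vnorm nx0 expr0n.
by rewrite mulrA mulfV // mul1r.
Qed.

Lemma dot_add_unit x sigma c : dot sigma sigma = 1 ->
  dot (x + c *: sigma) (x + c *: sigma) = dot x x + 2 * c * dot sigma x + c ^+ 2.
Proof.
move=> sigma1; have -> : c ^+ 2 = c ^+ 2 * dot sigma sigma by rewrite sigma1 mulr1.
by rewrite !dotE !mxE; ring.
Qed.

End DotProduct.

Section EnergySplitting.
Variables (R : rcfType) (mi mj M n g : R).

Definition cm_energy : R := (mi + mj) * n ^+ 2 / M.
Definition rel_energy : R := mi * mj / (mi + mj) * g ^+ 2 / M.
Definition total_energy : R := 2 + cm_energy + rel_energy.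
Definition energy_share : R := (1 + cm_energy) / total_energy.

Definition mean_energy_i : R := 1 + mi / M * (n ^+ 2 + (mj / (mi + mj) * g) ^+ 2).
Definition mean_energy_j : R := 1 + mj / M * (n ^+ 2 + (mi / (mi + mj) * g) ^+ 2).
Definition energy_amplitude : R := 2 * (mi * mj / ((mi + mj) * M) * g * n).

Hypotheses (mi_gt0 : 0 < mi) (mj_gt0 : 0 < mj) (M_gt0 : 0 < M).
Hypotheses (n_ge0 : 0 <= n) (g_ge0 : 0 <= g).

Let S_neq0 : mi + mj != 0. Proof. by rewrite lt0r_neq0 // addr_gt0. Qed.
Let M_neq0 : M != 0. Proof. exact: lt0r_neq0. Qed.

Lemma cm_energy_ge0 : 0 <= cm_energy.
Proof.
by apply: divr_ge0; [apply: mulr_ge0; [apply: addr_ge0; exact: ltW | exact: sqr_ge0]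
  | exact: ltW].
Qed.

Lemma rel_energy_ge0 : 0 <= rel_energy.
Proof.
apply: divr_ge0; last exact: ltW.
apply: mulr_ge0; last exact: sqr_ge0.
by apply: divr_ge0; [apply: mulr_ge0 | apply: addr_ge0]; exact: ltW.
Qed.

Lemma total_energy_gt0 : 0 < total_energy.
Proof. by rewrite /total_energy; have := cm_energy_ge0; have := rel_energy_ge0; lra. Qed.

Lemma total_energyE : mean_energy_i + mean_energy_j = total_energy.
Proof.
by rewrite /mean_energy_i /mean_energy_j /total_energy /cm_energy /rel_energy;
  field; apply/andP.
Qed.

Lemma energy_share_ge0_le1 : 0 <= energy_share <= 1.
Proof.
have E_gt0 := total_energy_gt0; have X_ge0 := cm_energy_ge0.
have Y_ge0 := rel_energy_ge0.
rewrite /energy_share divr_ge0 ?ler_pdivrMr // ?mul1r /total_energy /=; lra.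
Qed.

Lemma sqrt_energy_amplitude (E := total_energy) (s := energy_share)
    (r := mi / (mi + mj)) :
  2 * Num.sqrt (r * (1 - r) * (s * E - 1) * ((1 - s) * E - 1)) = energy_amplitude.
Proof.
rewrite /E /s /r /energy_share.
have E_neq0 : total_energy != 0 by rewrite lt0r_neq0 // total_energy_gt0.
have -> : (1 + cm_energy) / total_energy * total_energy - 1 = cm_energy by field.
have -> : (1 - (1 + cm_energy) / total_energy) * total_energy - 1 = rel_energy.
  by move: E_neq0; rewrite /total_energy => E_neq0; field.
have -> : mi / (mi + mj) * (1 - mi / (mi + mj)) * cm_energy * rel_energy
    = (mi * mj / ((mi + mj) * M) * g * n) ^+ 2.
  by rewrite /cm_energy /rel_energy; field; apply/andP.
rewrite sqrtr_sqr ger0_norm //.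
by rewrite !mulr_ge0 // ?addr_ge0 ?invr_ge0 ?mulr_ge0 ?addr_ge0 // ltW.
Qed.

Lemma mean_energy_i_amplitude_le : mean_energy_i + energy_amplitude <= total_energy.
Proof.
rewrite -subr_ge0 -total_energyE.
have -> : mean_energy_i + mean_energy_j - (mean_energy_i + energy_amplitude)
    = 1 + mj / M * (n - mi / (mi + mj) * g) ^+ 2.
  by rewrite /mean_energy_i /mean_energy_j /energy_amplitude; field; apply/andP.
by rewrite addr_ge0 // mulr_ge0 ?sqr_ge0 // divr_ge0 // ltW.
Qed.

Lemma mean_energy_j_amplitude_le : mean_energy_j + energy_amplitude <= total_energy.
Proof.
rewrite -subr_ge0 -total_energyE.
have -> : mean_energy_i + mean_energy_j - (mean_energy_j + energy_amplitude)
    = 1 + mi / M * (n - mj / (mi + mj) * g) ^+ 2.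
  by rewrite /mean_energy_i /mean_energy_j /energy_amplitude; field; apply/andP.
by rewrite addr_ge0 // mulr_ge0 ?sqr_ge0 // divr_ge0 // ltW.
Qed.

End EnergySplitting.

Section Collision.
Variables (R : rcfType) (I : nat) (m : 'I_I -> R).
Hypothesis m_gt0 : forall l, 0 < m l.

Lemma Mtot_gt0 (i : 'I_I) : 0 < Mtot m.
Proof.
rewrite /Mtot (bigD1 i) //= ltr_pwDl //.
by apply: sumr_ge0 => l _; exact: ltW.
Qed.

Lemma sqr_jbr i x : jbr m i x ^+ 2 = 1 + m i / Mtot m * dot x x.
Proof.
rewrite /jbr sqr_sqrtr ?sqr_vnorm // addr_ge0 // mulr_ge0 ?dot_ge0 //.
by rewrite divr_ge0 // ltW // (Mtot_gt0 i).
Qed.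

End Collision.

Lemma kinetic_energy_cm (R : rcfType) (mi mj : R) (v vs : 'rV[R]_3) :
  mi + mj != 0 ->
  mi * dot v v + mj * dot vs vs
    = (mi + mj) * vnorm (Vcm mi mj v vs) ^+ 2
      + mi * mj / (mi + mj) * vnorm (v - vs) ^+ 2.
Proof. by move=> S_neq0; rewrite !sqr_vnorm !dotE /Vcm !mxE; field. Qed.

Lemma sqr_vnorm_vpost (R : rcfType) (mi mj : R) (v vs sigma : 'rV[R]_3)
    (n := vnorm (Vcm mi mj v vs)) (c := mj / (mi + mj) * vnorm (v - vs)) :
  dot sigma sigma = 1 ->
  dot (vpost mi mj v vs sigma) (vpost mi mj v vs sigma)
    = n ^+ 2 + c ^+ 2 + 2 * c * (n * dot sigma (Vhat mi mj v vs)).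
Proof.
move=> sigma1; rewrite /n /c /Vhat dot_add_unit // vnorm_dot_normalized sqr_vnorm.
by ring.
Qed.

Lemma sqr_vnorm_vspost (R : rcfType) (mi mj : R) (v vs sigma : 'rV[R]_3)
    (n := vnorm (Vcm mi mj v vs)) (c := mi / (mi + mj) * vnorm (v - vs)) :
  dot sigma sigma = 1 ->
  dot (vspost mi mj v vs sigma) (vspost mi mj v vs sigma)
    = n ^+ 2 + c ^+ 2 - 2 * c * (n * dot sigma (Vhat mi mj v vs)).
Proof.
move=> sigma1; rewrite /n /c /Vhat /vspost -scaleNr dot_add_unit //.
by rewrite vnorm_dot_normalized sqr_vnorm; ring.
Qed.

Theorem lemma4p1 (R : rcfType) (I : nat) (m : 'I_I -> R)
  (hm : forall l, 0 < m l) (i j : 'I_I) (v vs : 'rV[R]_3) :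
  let E := jbr m i v ^+ 2 + jbr m j vs ^+ 2 in
  let r := m i / (m i + m j) in
  exists p q s : R,
    [/\ 0 <= s <= 1, p + q = E &
    let lambda := 2 * Num.sqrt (r * (1 - r) * (s * E - 1) * ((1 - s) * E - 1)) in
    [/\ forall sigma : 'rV[R]_3, dot sigma sigma = 1 ->
          jbr m i (vpost (m i) (m j) v vs sigma) ^+ 2
            = p + lambda * dot sigma (Vhat (m i) (m j) v vs)
          /\ jbr m j (vspost (m i) (m j) v vs sigma) ^+ 2
            = q - lambda * dot sigma (Vhat (m i) (m j) v vs),
        p + lambda <= E & q + lambda <= E]].
Proof.
move=> E r.
have mi_gt0 := hm i; have mj_gt0 := hm j; have M_gt0 := Mtot_gt0 hm i.
have S_neq0 : m i + m j != 0 by rewrite lt0r_neq0 // addr_gt0.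
have M_neq0 : Mtot m != 0 by rewrite lt0r_neq0.
set n := vnorm (Vcm (m i) (m j) v vs); set g := vnorm (v - vs).
have n_ge0 : 0 <= n by exact: sqrtr_ge0.
have g_ge0 : 0 <= g by exact: sqrtr_ge0.
have -> : E = total_energy (m i) (m j) (Mtot m) n g.
  rewrite /E !sqr_jbr // /total_energy /cm_energy /rel_energy.
  have -> : 1 + m i / Mtot m * dot v v + (1 + m j / Mtot m * dot vs vs)
      = 2 + (m i * dot v v + m j * dot vs vs) / Mtot m by field.
  by rewrite kinetic_energy_cm // -/n -/g; field; apply/andP.
exists (mean_energy_i (m i) (m j) (Mtot m) n g),
  (mean_energy_j (m i) (m j) (Mtot m) n g), (energy_share (m i) (m j) (Mtot m) n g).
rewrite /= /r sqrt_energy_amplitude //.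
split; [exact: energy_share_ge0_le1 | exact: total_energyE |].
split; [| exact: mean_energy_i_amplitude_le | exact: mean_energy_j_amplitude_le].
move=> sigma sigma1; rewrite !sqr_jbr // sqr_vnorm_vpost // sqr_vnorm_vspost //.
by rewrite -/n -/g /mean_energy_i /mean_energy_j /energy_amplitude; split; field;
  apply/andP.
Qed.
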